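(* Let $1\le k<n$ (or $k\le n$), $\mathcal X=\mathbb C^n$, and let $v_1>v_2>\dots>v_k>0$ and $v_{k+1}=0$. Let $\mathcal R$ be the set of $k$-tuples $(x_1,\dots,x_k)$ of orthonormal vectors in $\mathcal X$. Define the quantum score $S=(s,\mu)$ on reports $\mathcal R$ with outcomes $\{1,\dots,k+1\}$ by $\mu((x_1,\dots,x_k))=\{x_1x_1^*,\dots,x_kx_k^*,\,I-\sum_{i=1}^kx_ix_i^*\}$ and $s((x_1,\dots,x_k),y)=v_y$. Then for every $\rho\in\mathrm{Dens}(\mathcal X)$, $S((x_1,\dots,x_k);\rho)=\langle\sum_{i=1}^kv_ix_ix_i^*,\rho\rangle$, and the set of maximizers $\arg\max_{r\in\mathcal R}S(r;\rho)$ equals the set of orthonormal tuples $(x_1,\dots,x_k)$ such that $\rho x_i=\lambda_i(\rho)x_i$ for each $i=1,\dots,k$. In particular, $S$ elicits the set-valued property $\Gamma_{1..k}$.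
   Context: $\langle X,Y\rangle=\mathrm{Tr}(X^*Y)$; $\mathrm{Dens}(\mathcal X)$ the density matrices; $\lambda_i(\rho)$ the $i$-th largest eigenvalue of $\rho$. For a quantum score on a report set $\mathcal R$, $S=(s,\mu)$ with $\mu(r)$ a measurement (positive semidefinite operators summing to $I$) and expected score $S(r;\rho)=\sum_y\langle\mu(r)_y,\rho\rangle s(r,y)$. A set-valued property $\Gamma:\mathrm{Dens}(\mathcal X)\to 2^{\mathcal R}$ is elicited by $S$ if $\Gamma(\rho)=\arg\max_{r\in\mathcal R}S(r;\rho)$ for every $\rho$. $\Gamma_{1..k}(\rho)$ is the set of orthonormal $k$-tuples $(x_1,\dots,x_k)$ where $x_i$ is an eigenvector of $\rho$ with eigenvalue $\lambda_i(\rho)$. *)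

(* C : numClosedFieldType (e.g. the complex numbers). *)
From HB Require Import structures.
From mathcomp Require Import all_boot all_order all_algebra.
Set Implicit Arguments. Unset Strict Implicit. Unset Printing Implicit Defensive.
Import Order.TTheory GRing.Theory Num.Theory.
Local Open Scope ring_scope.
Local Open Scope sesquilinear_scope.

Section QDefs.
Variables (C : numClosedFieldType) (n : nat).

Definition hs_dot (X Y : 'M[C]_n) : C := \tr (X ^t* *m Y).

Definition hermitian (A : 'M[C]_n) : Prop := A ^t* = A.

Definition psd (A : 'M[C]_n) : Prop :=
  hermitian A /\ forall v : 'cV[C]_n, 0 <= (v ^t* *m A *m v) 0 0.

Definition density (rho : 'M[C]_n) : Prop := psd rho /\ \tr rho = 1.

(* eigenvalues (with multiplicity) sorted in non-increasing order;
   lambda_ i rho is the (i+1)-th largest eigenvalue (0-indexed) *)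
Definition eigs_sorted (A : 'M[C]_n) : seq C :=
  sort (fun a b => b <= a) [seq spectral_diag A 0 j | j : 'I_n].
Definition lambda_ (i : nat) (A : 'M[C]_n) : C := nth 0 (eigs_sorted A) i.

Definition outer (x : 'cV[C]_n) : 'M[C]_n := x *m x ^t*.

Definition is_measurement (Y : finType) (mu : Y -> 'M[C]_n) : Prop :=
  (forall y, psd (mu y)) /\ \sum_(y : Y) mu y = 1%:M.

Record qscore (Rep : Type) (Y : finType) := QScore {
  qs_s : Rep -> Y -> C;
  qs_mu : Rep -> Y -> 'M[C]_n }.

Definition exp_score (Rep : Type) (Y : finType) (S : qscore Rep Y)
  (r : Rep) (rho : 'M[C]_n) : C :=
  \sum_(y : Y) hs_dot (qs_mu S r y) rho * qs_s S r y.

Definition is_argmax (Rep : Type) (Rset : Rep -> Prop) (f : Rep -> C) (r : Rep) :=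
  Rset r /\ forall r', Rset r' -> f r' <= f r.

Definition elicits (Rep : Type) (Y : finType) (Rset : Rep -> Prop)
  (S : qscore Rep Y) (Gamma : 'M[C]_n -> Rep -> Prop) : Prop :=
  forall rho, density rho ->
    forall r, Gamma rho r <-> is_argmax Rset (fun r' => exp_score S r' rho) r.

Definition orthonormal_tuple (k : nat) (x : 'I_k -> 'cV[C]_n) : Prop :=
  forall i j, (x i) ^t* *m x j = (i == j)%:R%:M.

Definition Gamma_top (k : nat) (rho : 'M[C]_n) (x : 'I_k -> 'cV[C]_n) : Prop :=
  orthonormal_tuple x /\ forall i : 'I_k, rho *m x i = lambda_ i rho *: x i.

(* the score of the theorem: outcomes 'I_k.+1 (outcome ord_max = "k+1") *)
Definition topk_mu (k : nat) (x : 'I_k -> 'cV[C]_n) (y : 'I_k.+1) : 'M[C]_n :=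
  match unlift ord_max y with
  | Some j => outer (x j)
  | None => 1%:M - \sum_(i < k) outer (x i)
  end.

Definition topk_score (k : nat) (v : 'I_k.+1 -> C) : qscore ('I_k -> 'cV[C]_n) 'I_k.+1 :=
  QScore (fun _ y => v y) (@topk_mu k).

End QDefs.

(* Expand the reported vectors x_i in an orthonormal eigenbasis u_1, ..., u_n
   of rho ordered by decreasing eigenvalue and put w_ij = |<u_j, x_i>|^2.  By
   Parseval and Bessel the matrix w is doubly substochastic (rows sum to 1,
   columns to at most 1), and the expected score is
   sum_i v_i sum_j lambda_j w_ij.  Summation by parts writes it as
   sum_m (v_m - v_(m+1)) A_m, where the prefix sums A_m = sum_(i<=m) sum_j
   lambda_j w_ij are bounded by lambda_1 + ... + lambda_m (Ky Fan).  As the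
   v_i strictly decrease, the maximum is reached exactly when every prefix
   bound is tight, and tightness forces w_ij = 0 unless lambda_j = lambda_i,
   i.e. each x_i is an eigenvector for lambda_i. *)

From Pilot Require Import Defs.
From mathcomp Require Import all_boot all_order all_algebra perm.
From mathcomp Require Import ring.

Set Implicit Arguments.
Unset Strict Implicit.
Unset Printing Implicit Defensive.
Import Order.TTheory GRing.Theory Num.Theory.
Local Open Scope ring_scope.

Lemma abel_summation (R : comPzRingType) (V b : nat -> R) m :
  \sum_(i < m) V i * b i =
  \sum_(i < m) (V i - V i.+1) * \sum_(l < i.+1) b l + V m * \sum_(l < m) b l.
Proof.
elim: m => [|m IHm]; first by rewrite !big_ord0 mulr0 addr0.
rewrite !big_ord_recr /= IHm.
set s := \sum_(i < m) _; set t := \sum_(i < m) b i; ring.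
Qed.

Section Majorization.
Variables (R : numDomainType) (k n : nat) (V L : nat -> R) (w : nat -> nat -> R).
Hypothesis le_kn : (k <= n)%N.
Hypothesis V_decr : forall {i}, (i < k)%N -> V i.+1 < V i.
Hypothesis V_k : V k = 0.
Hypothesis L_noninc : forall {j1 j2}, (j1 <= j2 < n)%N -> L j2 <= L j1.
Hypothesis w_ge0 : forall i j, 0 <= w i j.
Hypothesis w_row : forall {i}, (i < k)%N -> \sum_(j < n) w i j = 1.
Hypothesis w_col : forall {j}, (j < n)%N -> \sum_(i < k) w i j <= 1.

Let a i := \sum_(j < n) L j * w i j.
Let W m j := \sum_(i < m) w i j.

Definition separating m t :=
  (forall j, (j < m)%N -> t <= L j) /\ (forall j, (m <= j < n)%N -> L j <= t).

Lemma separating_L i : (i < n)%N -> separating i (L i) /\ separating i.+1 (L i).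
Proof.
move=> lt_in; split; split=> j hj; apply: L_noninc; rewrite ?lt_in ?andbT //.
- exact: ltnW.
- by case/andP: hj => /ltnW ->.
Qed.

Lemma W_ge0 m j : 0 <= W m j.
Proof. exact: sumr_ge0. Qed.

Lemma W_le1 m j : (m <= k)%N -> (j < n)%N -> W m j <= 1.
Proof.
move=> le_mk lt_jn; apply: le_trans _ (w_col lt_jn).
rewrite /W (big_ord_widen _ (w^~ j) le_mk) [leRHS](bigID (fun i : 'I_k => (i < m)%N)).
by rewrite /= lerDl sumr_ge0.
Qed.

(* Both [W m] and the indicator of [j < m] have total mass [m], so any
   threshold [t] can be subtracted from [L]. *)
Lemma prefix_gapE m t : (m <= k)%N ->
  \sum_(i < m) a i - \sum_(i < m) L i
  = \sum_(j < n) (L j - t) * (W m j - (j < m)%:R).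
Proof.
move=> le_mk; have le_mn := leq_trans le_mk le_kn.
have trunc (F : nat -> R) : \sum_(j < n) F j * (j < m)%:R = \sum_(j < m) F j :> R.
  rewrite (big_ord_widen _ _ le_mn) [RHS]big_mkcond /=.
  by apply: eq_bigr => j _; case: ifP; rewrite ?mulr1 ?mulr0.
have sumW : \sum_(j < n) W m j = m%:R.
  rewrite /W exchange_big /= (eq_bigr (fun=> 1)) ?sumr_const ?card_ord // => i _.
  exact/w_row/(leq_trans (ltn_ord i)).
have -> : \sum_(i < m) a i = \sum_(j < n) L j * W m j.
  by rewrite /a exchange_big; apply: eq_bigr => j _; rewrite mulr_sumr.
rewrite [RHS](eq_bigr (fun j : 'I_n => L j * W m j - L j * (j < m)%:R
                                  - t * (W m j - 1 * (j < m)%:R))); last first.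
  by move=> j _; ring.
rewrite !sumrB -!mulr_sumr sumrB sumW (trunc (fun=> 1)) !trunc sumr_const card_ord.
by rewrite subrr mulr0 subr0.
Qed.

Lemma prefix_gap_term_le0 m t j : (m <= k)%N -> (j < n)%N -> separating m t ->
  (L j - t) * (W m j - (j < m)%:R) <= 0.
Proof.
move=> le_mk lt_jn [tL Lt]; case: (ltnP j m) => hjm.
  by apply: mulr_ge0_le0; rewrite ?subr_ge0 ?subr_le0 ?W_le1 ?tL.
by apply: mulr_le0_ge0; rewrite ?subr_le0 ?subr0 ?W_ge0 ?Lt ?hjm.
Qed.

Lemma prefix_le m : (m <= k)%N -> \sum_(i < m) a i <= \sum_(i < m) L i.
Proof.
case: m => [|i] le_mk; first by rewrite !big_ord0.
have [_ sep] := @separating_L i (leq_trans le_mk le_kn).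
rewrite -subr_le0 (@prefix_gapE i.+1 (L i) le_mk).
by apply: sumr_le0 => j _; apply: prefix_gap_term_le0.
Qed.

Lemma prefix_gap_term_eq0 m t j : (m <= k)%N -> (j < n)%N -> separating m t ->
  \sum_(i < m) a i = \sum_(i < m) L i -> (L j - t) * (W m j - (j < m)%:R) = 0.
Proof.
move=> le_mk lt_jn sep eq_m.
have ge0 (j' : 'I_n) : true -> 0 <= - ((L j' - t) * (W m j' - (j' < m)%:R)).
  by move=> _; rewrite oppr_ge0 prefix_gap_term_le0.
have sum0 : \sum_(j' < n) - ((L j' - t) * (W m j' - (j' < m)%:R)) = 0.
  by rewrite sumrN -prefix_gapE // eq_m subrr oppr0.
apply/eqP; rewrite -oppr_eq0; apply/eqP.
exact: (psumr_eq0P ge0 sum0 (i := Ordinal lt_jn) isT).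
Qed.

Lemma weighted_le : \sum_(i < k) V i * a i <= \sum_(i < k) V i * L i.
Proof.
rewrite !abel_summation V_k !mul0r !addr0; apply: ler_sum => i _.
by apply: ler_wpM2l; [rewrite subr_ge0 ltW ?V_decr | apply: prefix_le].
Qed.

Lemma weighted_eq_prefix m :
  \sum_(i < k) V i * a i = \sum_(i < k) V i * L i -> (m <= k)%N ->
  \sum_(i < m) a i = \sum_(i < m) L i.
Proof.
rewrite !abel_summation V_k !mul0r !addr0 => eq_k.
case: m => [|i] lt_ik; first by rewrite !big_ord0.
have ge0 (i' : 'I_k) : true -> 0 <= (V i' - V i'.+1) *
    (\sum_(l < i'.+1) L l - \sum_(l < i'.+1) a l).
  by move=> _; apply: mulr_ge0; rewrite subr_ge0 ?prefix_le // ltW ?V_decr.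
have sum0 : \sum_(i' < k) (V i' - V i'.+1) *
    (\sum_(l < i'.+1) L l - \sum_(l < i'.+1) a l) = 0.
  by rewrite (eq_bigr _ (fun i' _ => mulrBr _ _ _)) sumrB eq_k subrr.
have /eqP := psumr_eq0P ge0 sum0 (i := Ordinal lt_ik) isT.
by rewrite mulf_eq0 subr_eq0 (gt_eqF (V_decr lt_ik)) subr_eq0 => /eqP ->.
Qed.

(* Comparing the tight prefixes [i] and [i.+1], both against the threshold
   [L i], isolates row [i]. *)
Lemma weighted_eq_support i j :
  \sum_(i < k) V i * a i = \sum_(i < k) V i * L i -> (i < k)%N -> (j < n)%N ->
  w i j = 0 \/ L j = L i.
Proof.
move=> eq_k lt_ik lt_jn.
have [sep_i sep_Si] := @separating_L i (leq_trans lt_ik le_kn).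
have gap_i := @prefix_gap_term_eq0 i (L i) j (ltnW lt_ik) lt_jn sep_i
  (weighted_eq_prefix eq_k (ltnW lt_ik)).
have gap_Si := @prefix_gap_term_eq0 i.+1 (L i) j lt_ik lt_jn sep_Si
  (weighted_eq_prefix eq_k lt_ik).
have [-> | ne_ji] := eqVneq j i; first by right.
move: gap_Si; rewrite /W big_ord_recr /= ltnS leq_eqVlt (negbTE ne_ji) /=.
rewrite addrAC mulrDr gap_i add0r => /eqP; rewrite mulf_eq0 subr_eq0.
by case/orP=> /eqP; [right | left].
Qed.

End Majorization.

Local Open Scope sesquilinear_scope.

Section Vectors.
Variable C : numClosedFieldType.

Definition vdot n (x y : 'cV[C]_n) : C := (x ^t* *m y) 0 0.

Lemma vdotC n (x y : 'cV[C]_n) : vdot y x = (vdot x y)^*.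
Proof.
rewrite /vdot !mxE rmorph_sum; apply: eq_bigr => l _.
by rewrite !mxE rmorphM /= conjCK mulrC.
Qed.

Lemma vdot_sumZr I (r : seq I) (P : pred I) (c : I -> C) n (y : I -> 'cV[C]_n) x :
  vdot x (\sum_(i <- r | P i) c i *: y i) = \sum_(i <- r | P i) c i * vdot x (y i).
Proof.
rewrite /vdot mulmx_sumr summxE; apply: eq_bigr => i _.
by rewrite -scalemxAr mxE.
Qed.

Lemma vdotZr n (x y : 'cV[C]_n) c : vdot x (c *: y) = c * vdot x y.
Proof. by rewrite /vdot -scalemxAr mxE. Qed.

Lemma vdotBr n (x y y' : 'cV[C]_n) : vdot x (y - y') = vdot x y - vdot x y'.
Proof. by rewrite /vdot mulmxBr [LHS]mxE [X in _ + X]mxE. Qed.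

Lemma vdot_sumr I (r : seq I) (P : pred I) n (y : I -> 'cV[C]_n) x :
  vdot x (\sum_(i <- r | P i) y i) = \sum_(i <- r | P i) vdot x (y i).
Proof. by rewrite /vdot mulmx_sumr summxE. Qed.

Lemma vdot_ge0 n (x : 'cV[C]_n) : 0 <= vdot x x.
Proof.
rewrite /vdot mxE; apply: sumr_ge0 => l _.
by rewrite !mxE mulrC -normCK exprn_ge0.
Qed.

Lemma vdot_outer n (x y z : 'cV[C]_n) : vdot x (outer y *m z) = vdot x y * vdot y z.
Proof. by rewrite /vdot /outer -mulmxA (mulmxA (x ^t*)) [in LHS]mxE big_ord1. Qed.

Lemma vdot_orthonormal n k (u : 'I_k -> 'cV[C]_n) i j :
  orthonormal_tuple u -> vdot (u i) (u j) = (i == j)%:R.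
Proof. by move=> u_on; rewrite /vdot u_on mxE eqxx mulr1n. Qed.

Lemma trmxC_mul m p q (M : 'M[C]_(m, p)) (N : 'M[C]_(p, q)) :
  (M *m N) ^t* = N ^t* *m M ^t*.
Proof. by rewrite trmx_mul map_mxM. Qed.

Lemma outer_herm n (x : 'cV[C]_n) : (outer x) ^t* = outer x.
Proof. by rewrite /outer trmxC_mul trmxCK. Qed.

Lemma psd_gram n p (M : 'M[C]_(p, n)) : psd (M ^t* *m M).
Proof.
split; first by rewrite /Defs.hermitian trmxC_mul trmxCK.
move=> x; rewrite mulmxA -trmxC_mul -mulmxA; exact: (vdot_ge0 (M *m x)).
Qed.

Lemma psd_outer n (x : 'cV[C]_n) : psd (outer x).
Proof. by rewrite /outer -{1}(trmxCK x); exact: psd_gram. Qed.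

Lemma hs_dot_outer n (x : 'cV[C]_n) (A : 'M[C]_n) : hs_dot (outer x) A = vdot x (A *m x).
Proof.
by rewrite /hs_dot /vdot outer_herm /outer -mulmxA mxtrace_mulC trace_mx11 mulmxA.
Qed.

Lemma hs_dot_sumZl n (I : finType) (c : I -> C) (M : I -> 'M[C]_n) (N : 'M[C]_n) :
  hs_dot (\sum_i c i *: M i) N = \sum_i (c i)^* * hs_dot (M i) N.
Proof.
rewrite /hs_dot !raddf_sum mulmx_suml raddf_sum; apply: eq_bigr => i _ /=.
by rewrite linearZ /= map_mxZ -scalemxAl linearZ.
Qed.

End Vectors.

Lemma unlift_max_widen k (i : 'I_k) : unlift ord_max (widen_ord (leqnSn k) i) = Some i.
Proof.
have -> : widen_ord (leqnSn k) i = lift ord_max i.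
  by apply: val_inj; rewrite /= /bump leqNgt ltn_ord.
exact: liftK.
Qed.

Section OrthonormalTuple.
Variables (C : numClosedFieldType) (n k : nat) (x : 'I_k -> 'cV[C]_n).
Hypothesis x_on : orthonormal_tuple x.

Let S := \sum_(i < k) outer (x i).

Lemma outer_mul i j : outer (x i) *m outer (x j) = (i == j)%:R *: outer (x j).
Proof.
rewrite /outer mulmxA -(mulmxA (x i)) x_on mul_mx_scalar -!scalemxAl.
by case: eqP => [->|_]; rewrite ?scale0r.
Qed.

Lemma outer_sum_idem : S *m S = S.
Proof.
rewrite /S mulmx_suml; apply: eq_bigr => i _; rewrite mulmx_sumr (bigD1 i) //=.
rewrite outer_mul eqxx scale1r big1 ?addr0 // => j /negbTE ne_ji.
by rewrite outer_mul eq_sym ne_ji scale0r.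
Qed.

Lemma outer_sum_herm : S ^t* = S.
Proof. by rewrite /S !raddf_sum; apply: eq_bigr => i _; exact: outer_herm. Qed.

Lemma psd_1_sub_outer_sum : psd (1%:M - S).
Proof.
have herm : (1%:M - S) ^t* = 1%:M - S.
  by rewrite linearB /= map_mxB /= trmx1 map_mx1 outer_sum_herm.
suff -> : 1%:M - S = (1%:M - S) ^t* *m (1%:M - S) by exact: psd_gram.
by rewrite herm mulmxBl !mulmxBr !mul1mx !mulmx1 outer_sum_idem subrr subr0.
Qed.

Lemma topk_mu_measurement : is_measurement (topk_mu x).
Proof.
split=> [y|]; first by rewrite /topk_mu; case: unlift => [j|];
  [exact: psd_outer | exact: psd_1_sub_outer_sum].
rewrite big_ord_recr /= /topk_mu unlift_none.
under eq_bigr do rewrite unlift_max_widen.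
by rewrite addrC subrK.
Qed.

Lemma bessel z : \sum_(i < k) `|vdot (x i) z| ^+ 2 <= vdot z z.
Proof.
have [_ /(_ z)] := psd_1_sub_outer_sum.
rewrite -mulmxA -/(vdot z _) mulmxBl mul1mx mulmx_suml vdotBr vdot_sumr subr_ge0.
congr (_ <= _); apply: eq_bigr => i _.
by rewrite vdot_outer vdotC mulrC -normCK.
Qed.

End OrthonormalTuple.

Section ResolutionOfIdentity.
Variables (C : numClosedFieldType) (n : nat) (I : finType) (u : I -> 'cV[C]_n).
Hypothesis u_complete : \sum_i outer (u i) = 1%:M.

Lemma basis_expansion x : x = \sum_i vdot (u i) x *: u i.
Proof.
rewrite -{1}(mul1mx x) -u_complete mulmx_suml; apply: eq_bigr => i _.
by rewrite /outer -mulmxA [_ *m x]mx11_scalar mul_mx_scalar.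
Qed.

Lemma parseval x : vdot x x = \sum_i `|vdot (u i) x| ^+ 2.
Proof.
rewrite {2}(basis_expansion x) vdot_sumZr; apply: eq_bigr => i _.
by rewrite (vdotC (u i)) normCK.
Qed.

Variables (A : 'M[C]_n) (l : I -> C).
Hypothesis A_eig : forall i, A *m u i = l i *: u i.

Lemma vdot_eigen x : vdot x (A *m x) = \sum_i l i * `|vdot (u i) x| ^+ 2.
Proof.
rewrite {2}(basis_expansion x) mulmx_sumr.
under eq_bigr do rewrite -scalemxAr A_eig scalerA.
rewrite vdot_sumZr; apply: eq_bigr => i _.
by rewrite (vdotC (u i)) normCK mulrAC mulrC mulrA.
Qed.

Lemma eigenvector_of_support x c :
  (forall i, vdot (u i) x = 0 \/ l i = c) -> A *m x = c *: x.
Proof.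
move=> supp; rewrite [in LHS](basis_expansion x) [in RHS](basis_expansion x).
rewrite mulmx_sumr scaler_sumr; apply: eq_bigr => i _.
rewrite -scalemxAr A_eig !scalerA.
by case: (supp i) => ->; rewrite ?mul0r ?mulr0 // mulrC.
Qed.

End ResolutionOfIdentity.

Section OrthonormalBases.
Variables (C : numClosedFieldType) (n : nat).

Lemma orthonormal_delta : orthonormal_tuple (fun m : 'I_n => delta_mx m 0 : 'cV[C]_n).
Proof.
move=> a b; rewrite trmx_delta map_delta_mx mul_delta_mx_cond.
by apply/matrixP => i j; rewrite !ord1; case: (a == b); rewrite !mxE.
Qed.

Lemma sum_outer_delta : \sum_(m < n) outer (delta_mx m 0 : 'cV[C]_n) = 1%:M.
Proof.
apply/matrixP => a b; rewrite summxE (bigD1 a) //= big1 => [|m ne_ma].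
  by rewrite /outer trmx_delta map_delta_mx mul_delta_mx !mxE !eqxx addr0 eq_sym.
by rewrite /outer trmx_delta map_delta_mx mul_delta_mx mxE eq_sym (negbTE ne_ma).
Qed.

Lemma orthonormal_comp k l (x : 'I_k -> 'cV[C]_n) (f : 'I_l -> 'I_k) :
  orthonormal_tuple x -> injective f -> orthonormal_tuple (x \o f).
Proof. by move=> x_on f_inj a b; rewrite /= x_on (inj_eq f_inj). Qed.

Lemma orthonormal_unitary k (x : 'I_k -> 'cV[C]_n) (M : 'M[C]_n) :
  M ^t* *m M = 1%:M -> orthonormal_tuple x ->
  orthonormal_tuple (fun i => M *m x i).
Proof.
by move=> MtM x_on a b; rewrite trmxC_mul mulmxA -(mulmxA (x a ^t*)) MtM mulmx1 x_on.
Qed.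

Lemma sum_outer_unitary (I : finType) (x : I -> 'cV[C]_n) (M : 'M[C]_n) :
  \sum_i outer (M *m x i) = M *m (\sum_i outer (x i)) *m M ^t*.
Proof.
rewrite mulmx_sumr mulmx_suml; apply: eq_bigr => i _.
by rewrite /outer trmxC_mul !mulmxA.
Qed.

End OrthonormalBases.

Section SortedEigenbasis.
Variables (C : numClosedFieldType) (n : nat) (A : 'M[C]_n).

Lemma lambda_spectral :
  exists p : {perm 'I_n}, forall j : 'I_n, lambda_ j A = spectral_diag A 0 (p j).
Proof.
set leT := relpre (spectral_diag A 0) (fun a b : C => b <= a).
have : perm_eq (sort leT (enum 'I_n)) (ord_tuple n) by rewrite perm_sort val_ord_tuple.
case/tuple_permP => p ordE; exists p => j.
rewrite /lambda_ /eigs_sorted sort_map ordE (nth_map j) ?size_tuple //.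
by rewrite -/(nth j (mktuple _) j) nth_mktuple tnth_ord_tuple.
Qed.

Hypothesis A_herm : A ^t* = A.

Lemma hermitian_hermsymmx : A \is hermsymmx.
Proof. by apply/is_hermitianmxP; rewrite expr0 scale1r A_herm. Qed.

Lemma spectral_diag_real j : spectral_diag A 0 j \is Num.real.
Proof. by have /mxOverP := hermitian_spectral_diag_real hermitian_hermsymmx; apply. Qed.

Lemma lambda_noninc j1 j2 : (j1 <= j2 < n)%N -> lambda_ j2 A <= lambda_ j1 A.
Proof.
case/andP=> le_j12 lt_j2n.
have size_eigs : size (eigs_sorted A) = n by rewrite size_sort size_map size_enum_ord.
have real_eigs : all (fun a : C => a \is Num.real) [seq spectral_diag A 0 j | j : 'I_n].
  by apply/allP => a /mapP [j _ ->]; exact: spectral_diag_real.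
have sorted_eigs : sorted (fun a b : C => b <= a) (eigs_sorted A).
  by apply: (sort_sorted_in _ real_eigs) => a b ra rb; rewrite /= orbC real_leVge.
have geT_trans : transitive (fun a b : C => b <= a).
  by move=> b a c /= ab bc; exact: le_trans bc ab.
apply: (sorted_leq_nth geT_trans (fun a => lexx a) 0 sorted_eigs) => //.
  by rewrite inE size_eigs (leq_ltn_trans le_j12).
by rewrite inE size_eigs.
Qed.

Lemma sorted_eigenbasis : exists u : 'I_n -> 'cV[C]_n,
  [/\ orthonormal_tuple u, \sum_j outer (u j) = 1%:M
    & forall j, A *m u j = lambda_ j A *: u j].
Proof.
have [p lambdaE] := lambda_spectral.
set P := spectralmx A; set d := spectral_diag A.
have PPt : P *m P ^t* = 1%:M by apply/unitarymxP; exact: spectral_unitarymx.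
have PtP : P ^t* *m P = 1%:M := mulmx1C PPt.
have AE : A = P ^t* *m diag_mx d *m P.
  have /orthomx_spectralP {1}-> := hermitian_normalmx hermitian_hermsymmx.
  by rewrite invmx_unitary // spectral_unitarymx.
pose e (m : 'I_n) : 'cV[C]_n := delta_mx m 0.
exists (fun j => P ^t* *m e (p j)); split.
- apply: (orthonormal_unitary (x := e \o p)); first by rewrite trmxCK.
  by apply: orthonormal_comp; [exact: orthonormal_delta | exact: perm_inj].
- rewrite sum_outer_unitary.
  rewrite -(reindex_inj (P := xpredT) (F := fun m => outer (e m)) (@perm_inj _ p)).
  by rewrite sum_outer_delta mulmx1 trmxCK PtP.
- move=> j; rewrite lambdaE [in LHS]AE -!mulmxA (mulmxA P) PPt mul1mx scalemxAr.
  congr (_ *m _); apply/matrixP => a b; rewrite mul_diag_mx !mxE.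
  by case: eqP => [->|]; rewrite ?mulr1 ?mulr0.
Qed.

End SortedEigenbasis.

Section TopK.
Variables (C : numClosedFieldType) (n k : nat) (v : 'I_k.+1 -> C).
Hypothesis v_max : v ord_max = 0.

Lemma exp_score_topk (x : 'I_k -> 'cV[C]_n) rho :
  exp_score (topk_score n v) x rho
  = \sum_(i < k) v (widen_ord (leqnSn k) i) * vdot (x i) (rho *m x i).
Proof.
rewrite /exp_score /= big_ord_recr /= v_max mulr0 addr0; apply: eq_bigr => i _.
by rewrite /topk_mu unlift_max_widen hs_dot_outer mulrC.
Qed.

Hypothesis lt0k : (0 < k)%N.
Hypothesis le_kn : (k <= n)%N.
Hypothesis v_decr : forall i j : 'I_k.+1, (i < j)%N -> v j < v i.
Variables (rho : 'M[C]_n) (u : 'I_n -> 'cV[C]_n).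
Hypothesis rho_herm : rho ^t* = rho.
Hypotheses (u_on : orthonormal_tuple u) (u_complete : \sum_j outer (u j) = 1%:M).
Hypothesis u_eig : forall j, rho *m u j = lambda_ j rho *: u j.

Let score x := exp_score (topk_score n v) x rho.
Let V i := v (inord i).
Let L j := lambda_ j rho.
(* Weight of the [i]-th reported vector on the [j]-th eigenvector of [rho];
   nat indices out of range are clamped to a default ordinal. *)
Let w (x : 'I_k -> 'cV[C]_n) i j :=
  `|vdot (u (insubd (Ordinal (leq_trans lt0k le_kn)) j))
         (x (insubd (Ordinal lt0k) i))| ^+ 2.

Let V_widen (i : 'I_k) : v (widen_ord (leqnSn k) i) = V i.
Proof. by rewrite /V; congr v; apply: val_inj; rewrite /= inordK // ltnS ltnW. Qed.

Lemma topk_score_weighted x :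
  score x = \sum_(i < k) V i * \sum_(j < n) L j * w x i j.
Proof.
rewrite /score exp_score_topk; apply: eq_bigr => i _.
rewrite V_widen (vdot_eigen u_complete u_eig); congr (_ * _).
by apply: eq_bigr => j _; rewrite /w !valKd.
Qed.

Let V_decr i : (i < k)%N -> V i.+1 < V i.
Proof. by move=> lt_ik; apply: v_decr; rewrite !inordK // ltnS ltnW. Qed.

Let V_k : V k = 0.
Proof. by rewrite /V -v_max; congr v; apply: val_inj; rewrite /= inordK. Qed.

Let w_ge0 x i j : 0 <= w x i j.
Proof. exact: exprn_ge0. Qed.

Let w_row x : orthonormal_tuple x -> forall i, (i < k)%N -> \sum_(j < n) w x i j = 1.
Proof.
move=> x_on i _; under eq_bigr do rewrite /w valKd.
by rewrite -(parseval u_complete) vdot_orthonormal // eqxx.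
Qed.

Let w_col x : orthonormal_tuple x -> forall j, (j < n)%N -> \sum_(i < k) w x i j <= 1.
Proof.
move=> x_on j _; rewrite /w; under eq_bigr do rewrite valKd vdotC norm_conjC.
by apply: le_trans (bessel x_on _) _; rewrite vdot_orthonormal // eqxx.
Qed.

Lemma topk_score_le x : orthonormal_tuple x -> score x <= \sum_(i < k) V i * L i.
Proof.
move=> x_on; rewrite topk_score_weighted.
exact: weighted_le le_kn V_decr V_k (lambda_noninc rho_herm) (w_ge0 x)
  (w_row x_on) (w_col x_on).
Qed.

Lemma topk_score_Gamma (x : 'I_k -> 'cV[C]_n) :
  Gamma_top rho x -> score x = \sum_(i < k) V i * L i.
Proof.
case=> x_on x_eig; rewrite /score exp_score_topk; apply: eq_bigr => i _.
by rewrite x_eig vdotZr vdot_orthonormal // eqxx mulr1 V_widen.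
Qed.

Lemma Gamma_top_exists : exists x : 'I_k -> 'cV[C]_n, Gamma_top rho x.
Proof.
exists (fun i => u (widen_ord le_kn i)); split=> [|i]; last exact: u_eig.
have widen_inj : injective (widen_ord le_kn) by move=> a b /(congr1 val) /= /val_inj.
exact: orthonormal_comp u_on widen_inj.
Qed.

Lemma topk_score_eq_Gamma (x : 'I_k -> 'cV[C]_n) : orthonormal_tuple x ->
  score x = \sum_(i < k) V i * L i -> Gamma_top rho x.
Proof.
move=> x_on; rewrite topk_score_weighted => score_max; split=> // i.
apply: (eigenvector_of_support u_complete u_eig) => j.
have := weighted_eq_support le_kn V_decr V_k (lambda_noninc rho_herm) (w_ge0 x)
  (w_row x_on) (w_col x_on) score_max (ltn_ord i) (ltn_ord j).
rewrite /w !valKd => -[/eqP|->]; last by right.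
by rewrite expf_eq0 /= normr_eq0 => /eqP; left.
Qed.

Lemma topk_argmax_eigenbasis x :
  is_argmax (@orthonormal_tuple C n k) score x <-> Gamma_top rho x.
Proof.
have [y Gy] := Gamma_top_exists.
split=> [[x_on x_max] | Gx].
  apply: (topk_score_eq_Gamma x_on); apply/le_anti/andP; split.
    exact: topk_score_le x_on.
  by rewrite -(topk_score_Gamma Gy) x_max //; case: Gy.
split=> [|r r_on]; first by case: Gx.
by rewrite (topk_score_Gamma Gx) topk_score_le.
Qed.

End TopK.

Lemma topk_argmax (C : numClosedFieldType) n k (v : 'I_k.+1 -> C)
    (rho : 'M[C]_n) (x : 'I_k -> 'cV[C]_n) :
  v ord_max = 0 -> (0 < k)%N -> (k <= n)%N ->
  (forall i j : 'I_k.+1, (i < j)%N -> v j < v i) -> rho ^t* = rho ->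
  is_argmax (@orthonormal_tuple C n k) (fun r => exp_score (topk_score n v) r rho) x
  <-> Gamma_top rho x.
Proof.
move=> v_max lt0k le_kn v_decr rho_herm.
have [u [u_on u_complete u_eig]] := sorted_eigenbasis rho_herm.
exact: topk_argmax_eigenbasis.
Qed.

Theorem mainTheorem12 (C : numClosedFieldType) (n k : nat)
  (hk1 : (1 <= k)%N) (hkn : (k <= n)%N)
  (v : 'I_k.+1 -> C)
  (hv_dec : forall i j : 'I_k.+1, (i < j)%N -> v j < v i)
  (hv_last : v ord_max = 0) :
  (forall x : 'I_k -> 'cV[C]_n, orthonormal_tuple x -> is_measurement (topk_mu x))
  /\ (forall rho : 'M[C]_n, density rho ->
        forall x : 'I_k -> 'cV[C]_n, orthonormal_tuple x ->
          exp_score (topk_score n v) x rho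
          = hs_dot (\sum_(i < k) v (widen_ord (leqnSn k) i) *: outer (x i)) rho)
  /\ (forall rho : 'M[C]_n, density rho ->
        forall x : 'I_k -> 'cV[C]_n,
          is_argmax (@orthonormal_tuple C n k) (fun r => exp_score (topk_score n v) r rho) x
          <-> (orthonormal_tuple x /\ forall i : 'I_k, rho *m x i = lambda_ i rho *: x i))
  /\ elicits (@orthonormal_tuple C n k) (topk_score n v) (@Gamma_top C n k).
Proof.
have argmax rho : density rho -> forall x,
    is_argmax (@orthonormal_tuple C n k) (fun r => exp_score (topk_score n v) r rho) x
    <-> Gamma_top rho x.
  by move=> [[rho_herm _] _] x; exact: topk_argmax.
split; first by move=> x; exact: topk_mu_measurement.
split.
  move=> rho _ x _; rewrite exp_score_topk // hs_dot_sumZl; apply: eq_bigr => i _.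
  rewrite hs_dot_outer conj_Creal // gtr0_real // -hv_last.
  exact: (hv_dec (widen_ord (leqnSn k) i) ord_max (ltn_ord i)).
split; first exact: argmax.
by move=> rho rho_dens x; exact: iff_sym (argmax rho rho_dens x).
Qed.
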